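(* Let $d\ge2$, $L\ge2$, $\sigma>0$ and define, with $c_1(n)=1+n\sigma^2$, $c_2(n)=1+\sigma^2(d+n)$, $c_3(\sigma,L)=16\sigma^2c_2(6)+8\sigma^2(L-1)c_1(6)+4\sigma^2(L-1)c_2(3)+\sigma^2(L-1)(L-2)c_1(6)+4c_2(8)+4(L-1)c_1(5)+2(L-1)c_2(4)+(L-1)(L-2)c_1(4)+4\sigma^2(L-1)$, and $\lambda^\star(\sigma,L)=\dfrac{2Lc_2(4)+L(L-1)c_1(4)}{c_3(\sigma,L)}$. Consider the function $\mathcal{R}^<(\kappa_0,\kappa_1)=A(\kappa_0^4+\kappa_1^4)+B(\kappa_0^2+\kappa_1^2)+C\kappa_0^2\kappa_1^2+D$ on $[-1,1]^2$ with $\lambda=\lambda^\star(\sigma,L)$. Then the points $(\pm1,\pm1)$ are global minima of $\mathcal{R}^<$ on $[-1,1]^2$.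
   Context: The constants (depending on $\lambda,\sigma,L,d$) are $A=\frac{2\lambda^2}{L^2}c_2(8)+\frac{2\lambda^2(L-1)}{L^2}c_1(5)+\frac{\lambda^2(L-1)}{L^2}c_2(4)+\frac{\lambda^2(L-1)(L-2)}{2L^2}c_1(4)$, $B=-\frac{2\lambda}{L}c_2(4)+\frac{16\lambda^2\sigma^2}{L^2}c_2(6)+\frac{8\lambda^2\sigma^2(L-1)}{L^2}c_1(6)-\frac{\lambda(L-1)}{L}c_1(4)+\frac{4\lambda^2\sigma^2(L-1)}{L^2}c_2(3)+\frac{\lambda^2\sigma^2(L-1)(L-2)}{L^2}c_1(6)$, $C=\frac{4\lambda^2\sigma^2(L-1)}{L^2}$, $D=c_1(d)-\frac{8\lambda\sigma^2}{L}c_2(2)+\frac{32\lambda^2\sigma^4}{L^2}c_2(4)+\frac{64\lambda^2\sigma^6(L-1)}{L^2}-\frac{8\lambda\sigma^4(L-1)}{L}+\frac{8\lambda^2\sigma^4(L-1)}{L^2}c_2(2)+\frac{8\lambda^2\sigma^6(L-1)(L-2)}{L^2}$. This function equals the attention risk $\mathcal{R}(\mu_0,\mu_1)=\frac1L\sum_\ell\mathbb{E}\|X_\ell-T^{\mathrm{lin},\mu_0,\mu_1}(\mathbb{X})_\ell\|^2$ on the manifold $\{(\mu_0,\mu_1)\in(\mathbb{S}^{d-1})^2:\langle\mu_1^\star,\mu_0\rangle=\langle\mu_0^\star,\mu_1\rangle=\langle\mu_0,\mu_1\rangle=0\}$, written in terms of $\kappa_0=\langle\mu_0^\star,\mu_0\rangle$,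 $\kappa_1=\langle\mu_1^\star,\mu_1\rangle$, for data i.i.d. from $\frac12\mathcal{N}(\mu_0^\star,\sigma^2I_d)+\frac12\mathcal{N}(\mu_1^\star,\sigma^2I_d)$ with orthonormal centroids, where $T^{\mathrm{lin},\mu_0,\mu_1}(\mathbb{X})_\ell=\frac{2}{L}\sum_k\lambda X_\ell^\top(\mu_0\mu_0^\top+\mu_1\mu_1^\top)X_kX_k$. *)

From Stdlib Require Import Reals Lra.
Open Scope R_scope.

Definition c1 (sigma n : R) : R := 1 + n * sigma ^ 2.
Definition c2 (sigma d n : R) : R := 1 + sigma ^ 2 * (d + n).

Definition coefA (lam sigma L d : R) : R :=
  2 * lam ^ 2 / L ^ 2 * c2 sigma d 8
  + 2 * lam ^ 2 * (L - 1) / L ^ 2 * c1 sigma 5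
  + lam ^ 2 * (L - 1) / L ^ 2 * c2 sigma d 4
  + lam ^ 2 * (L - 1) * (L - 2) / (2 * L ^ 2) * c1 sigma 4.

Definition coefB (lam sigma L d : R) : R :=
  - (2 * lam / L) * c2 sigma d 4
  + 16 * lam ^ 2 * sigma ^ 2 / L ^ 2 * c2 sigma d 6
  + 8 * lam ^ 2 * sigma ^ 2 * (L - 1) / L ^ 2 * c1 sigma 6
  - lam * (L - 1) / L * c1 sigma 4
  + 4 * lam ^ 2 * sigma ^ 2 * (L - 1) / L ^ 2 * c2 sigma d 3
  + lam ^ 2 * sigma ^ 2 * (L - 1) * (L - 2) / L ^ 2 * c1 sigma 6.

Definition coefC (lam sigma L : R) : R :=
  4 * lam ^ 2 * sigma ^ 2 * (L - 1) / L ^ 2.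

Definition coefD (lam sigma L d : R) : R :=
  c1 sigma d
  - 8 * lam * sigma ^ 2 / L * c2 sigma d 2
  + 32 * lam ^ 2 * sigma ^ 4 / L ^ 2 * c2 sigma d 4
  + 64 * lam ^ 2 * sigma ^ 6 * (L - 1) / L ^ 2
  - 8 * lam * sigma ^ 4 * (L - 1) / L
  + 8 * lam ^ 2 * sigma ^ 4 * (L - 1) / L ^ 2 * c2 sigma d 2
  + 8 * lam ^ 2 * sigma ^ 6 * (L - 1) * (L - 2) / L ^ 2.

Definition c3 (sigma L d : R) : R :=
  16 * sigma ^ 2 * c2 sigma d 6
  + 8 * sigma ^ 2 * (L - 1) * c1 sigma 6
  + 4 * sigma ^ 2 * (L - 1) * c2 sigma d 3
  + sigma ^ 2 * (L - 1) * (L - 2) * c1 sigma 6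
  + 4 * c2 sigma d 8
  + 4 * (L - 1) * c1 sigma 5
  + 2 * (L - 1) * c2 sigma d 4
  + (L - 1) * (L - 2) * c1 sigma 4
  + 4 * sigma ^ 2 * (L - 1).

Definition lamstar (sigma L d : R) : R :=
  (2 * L * c2 sigma d 4 + L * (L - 1) * c1 sigma 4) / c3 sigma L d.

Definition risk_lt (lam sigma L d k0 k1 : R) : R :=
  coefA lam sigma L d * (k0 ^ 4 + k1 ^ 4)
  + coefB lam sigma L d * (k0 ^ 2 + k1 ^ 2)
  + coefC lam sigma L * (k0 ^ 2 * k1 ^ 2)
  + coefD lam sigma L d.

(* At lambda = lamstar the coefficients satisfy B = -2A - C, which is exactly the condition
   for the corners (+-1, +-1) to be critical points.  With x = k0^2 and y = k1^2 the
   difference R^<(k0, k1) - R^<(+-1, +-1) then factors as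
   A ((1 - x)^2 + (1 - y)^2) + C (1 - x) (1 - y), which is nonnegative on [0, 1]^2 since
   A and C are nonnegative for every lambda. *)
From Pilot Require Import Defs.
From Stdlib Require Import Reals Lra Psatz.
Open Scope R_scope.

(* [c1] alone refers to [RiemannInt.c1], hence the qualified [Defs.c1], [Defs.c2]. *)

Lemma biquartic_min_at_corners (A B C D s0 s1 k0 k1 : R) :
  0 <= A -> 0 <= C -> B = - 2 * A - C ->
  s0 ^ 2 = 1 -> s1 ^ 2 = 1 -> k0 ^ 2 <= 1 -> k1 ^ 2 <= 1 ->
  A * (s0 ^ 4 + s1 ^ 4) + B * (s0 ^ 2 + s1 ^ 2) + C * (s0 ^ 2 * s1 ^ 2) + D
  <= A * (k0 ^ 4 + k1 ^ 4) + B * (k0 ^ 2 + k1 ^ 2) + C * (k0 ^ 2 * k1 ^ 2) + D.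
Proof.
  intros HA HC -> Hs0 Hs1 Hk0 Hk1.
  replace (s0 ^ 4) with ((s0 ^ 2) ^ 2) by ring.
  replace (s1 ^ 4) with ((s1 ^ 2) ^ 2) by ring.
  replace (k0 ^ 4) with ((k0 ^ 2) ^ 2) by ring.
  replace (k1 ^ 4) with ((k1 ^ 2) ^ 2) by ring.
  rewrite Hs0, Hs1.
  set (x := k0 ^ 2) in *. set (y := k1 ^ 2) in *.
  assert (Hdiff : A * (x ^ 2 + y ^ 2) + (- 2 * A - C) * (x + y) + C * (x * y) + D
    - (A * (1 ^ 2 + 1 ^ 2) + (- 2 * A - C) * (1 + 1) + C * (1 * 1) + D)
    = A * ((1 - x) ^ 2 + (1 - y) ^ 2) + C * ((1 - x) * (1 - y))) by ring.
  assert (0 <= A * ((1 - x) ^ 2 + (1 - y) ^ 2))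
    by (apply Rmult_le_pos; [lra | nra]).
  assert (0 <= C * ((1 - x) * (1 - y)))
    by (apply Rmult_le_pos; [lra | apply Rmult_le_pos; lra]).
  lra.
Qed.

Lemma c1_pos (sigma n : R) : 0 <= n -> 0 < Defs.c1 sigma n.
Proof.
  intros Hn. unfold Defs.c1. assert (0 <= sigma ^ 2) by apply pow2_ge_0. nra.
Qed.

Lemma c2_pos (sigma d n : R) : 0 <= d + n -> 0 < Defs.c2 sigma d n.
Proof.
  intros Hn. unfold Defs.c2. assert (0 <= sigma ^ 2) by apply pow2_ge_0. nra.
Qed.

Lemma c3_pos (sigma L d : R) : 2 <= L -> 0 <= d -> 0 < c3 sigma L d.
Proof.
  intros HL Hd. unfold c3.
  assert (Hs : 0 <= sigma ^ 2) by apply pow2_ge_0.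
  assert (HL2 : 0 <= (L - 1) * (L - 2)) by nra.
  assert (Hc16 := c1_pos sigma 6 ltac:(lra)).
  assert (Hc15 := c1_pos sigma 5 ltac:(lra)).
  assert (Hc14 := c1_pos sigma 4 ltac:(lra)).
  assert (Hc26 := c2_pos sigma d 6 ltac:(lra)).
  assert (Hc23 := c2_pos sigma d 3 ltac:(lra)).
  assert (Hc28 := c2_pos sigma d 8 ltac:(lra)).
  assert (Hc24 := c2_pos sigma d 4 ltac:(lra)).
  set (s := sigma ^ 2) in *.
  assert (0 <= s * (L - 1)) by nra.
  assert (0 <= 16 * s * Defs.c2 sigma d 6) by nra.
  assert (0 <= 8 * s * (L - 1) * Defs.c1 sigma 6) by nra.
  assert (0 <= 4 * s * (L - 1) * Defs.c2 sigma d 3) by nra.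
  assert (0 <= s * (L - 1) * (L - 2) * Defs.c1 sigma 6).
  { replace (s * (L - 1) * (L - 2)) with (s * ((L - 1) * (L - 2))) by ring.
    apply Rmult_le_pos; [apply Rmult_le_pos |]; lra. }
  assert (0 <= 4 * (L - 1) * Defs.c1 sigma 5) by nra.
  assert (0 <= 2 * (L - 1) * Defs.c2 sigma d 4) by nra.
  assert (0 <= (L - 1) * (L - 2) * Defs.c1 sigma 4) by nra.
  lra.
Qed.

Lemma coefA_ge0 (lam sigma L d : R) : 2 <= L -> 0 <= d -> 0 <= coefA lam sigma L d.
Proof.
  intros HL Hd. unfold coefA, Defs.c1, Defs.c2.
  assert (Hs : 0 <= sigma ^ 2) by apply pow2_ge_0.
  set (s := sigma ^ 2) in *.
  assert (Hl : 0 <= lam ^ 2 / L ^ 2).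
  { apply Rmult_le_pos; [apply pow2_ge_0 |].
    apply Rlt_le, Rinv_0_lt_compat, pow_lt; lra. }
  replace (2 * lam ^ 2 / L ^ 2 * (1 + s * (d + 8))
    + 2 * lam ^ 2 * (L - 1) / L ^ 2 * (1 + 5 * s)
    + lam ^ 2 * (L - 1) / L ^ 2 * (1 + s * (d + 4))
    + lam ^ 2 * (L - 1) * (L - 2) / (2 * L ^ 2) * (1 + 4 * s))
    with (lam ^ 2 / L ^ 2 * (2 * (1 + s * (d + 8)) + 2 * (L - 1) * (1 + 5 * s)
      + (L - 1) * (1 + s * (d + 4)) + (L - 1) * (L - 2) / 2 * (1 + 4 * s)))
    by (field; lra).
  apply Rmult_le_pos; [exact Hl |].
  assert (0 <= s * (d + 8)) by nra.
  assert (0 <= s * (d + 4)) by nra.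
  assert (0 <= (L - 1) * (L - 2)) by nra.
  nra.
Qed.

Lemma coefC_ge0 (lam sigma L : R) : 1 <= L -> 0 <= coefC lam sigma L.
Proof.
  intros HL. unfold coefC.
  replace (4 * lam ^ 2 * sigma ^ 2 * (L - 1) / L ^ 2)
    with (lam ^ 2 / L ^ 2 * (4 * sigma ^ 2 * (L - 1))) by (field; lra).
  apply Rmult_le_pos.
  - apply Rmult_le_pos; [apply pow2_ge_0 |].
    apply Rlt_le, Rinv_0_lt_compat, pow_lt; lra.
  - assert (0 <= sigma ^ 2) by apply pow2_ge_0. nra.
Qed.

(* [2 A + B + C] is half the derivative of R^< in k0 at a corner. *)
Lemma coefB_2coefA_coefC (lam sigma L d : R) : L <> 0 ->
  coefB lam sigma L d + 2 * coefA lam sigma L d + coefC lam sigma L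
  = lam / L * (lam / L * c3 sigma L d - (2 * Defs.c2 sigma d 4 + (L - 1) * Defs.c1 sigma 4)).
Proof.
  intros HL. unfold coefA, coefB, coefC, c3. field. exact HL.
Qed.

Lemma lamstar_c3 (sigma L d : R) : L <> 0 -> c3 sigma L d <> 0 ->
  lamstar sigma L d / L * c3 sigma L d = 2 * Defs.c2 sigma d 4 + (L - 1) * Defs.c1 sigma 4.
Proof.
  intros HL Hc3. unfold lamstar. field. split; assumption.
Qed.

Lemma coefB_lamstar (sigma L d : R) : 2 <= L -> 0 <= d ->
  let lam := lamstar sigma L d in
  coefB lam sigma L d = - 2 * coefA lam sigma L d - coefC lam sigma L.
Proof.
  intros HL Hd lam.
  assert (HL0 : L <> 0) by lra.
  assert (Hc3 : c3 sigma L d <> 0) by (apply Rgt_not_eq, c3_pos; assumption).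
  assert (Hsum := coefB_2coefA_coefC lam sigma L d HL0).
  unfold lam in Hsum. rewrite (lamstar_c3 sigma L d HL0 Hc3) in Hsum.
  fold lam in Hsum. lra.
Qed.

Theorem proposition10 (d L : nat) (sigma : R) :
  (2 <= d)%nat -> (2 <= L)%nat -> 0 < sigma ->
  let lam := lamstar sigma (INR L) (INR d) in
  forall s0 s1 : R, (s0 = 1 \/ s0 = -1) -> (s1 = 1 \/ s1 = -1) ->
  forall k0 k1 : R, -1 <= k0 <= 1 -> -1 <= k1 <= 1 ->
    risk_lt lam sigma (INR L) (INR d) s0 s1
    <= risk_lt lam sigma (INR L) (INR d) k0 k1.
Proof.
  intros _ HL _ lam s0 s1 Hs0 Hs1 k0 k1 Hk0 Hk1.
  assert (HLr : 2 <= INR L) by exact (le_INR 2 L HL).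
  assert (Hdr : 0 <= INR d) by apply pos_INR.
  apply biquartic_min_at_corners.
  - apply coefA_ge0; assumption.
  - apply coefC_ge0; lra.
  - apply coefB_lamstar; assumption.
  - destruct Hs0 as [-> | ->]; ring.
  - destruct Hs1 as [-> | ->]; ring.
  - nra.
  - nra.
Qed.
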